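(* Let $G$ be a connected split graph with at least two vertices. A vertex $v\in V(G)$ is an $\mathcal{F}$-branch leaf of some DFS ordering of $G$ if and only if $v$ is not a cut vertex of $G$.
   Context: Graphs are finite, simple, undirected. A split graph is a graph whose vertex set can be partitioned into a clique and an independent set. A vertex ordering of $G$ is a bijection $\sigma:\{1,\dots,n\}\to V(G)$; $u\prec_\sigma w$ means $u$ comes before $w$. DFS orderings are produced by the label search: initially all labels are $\emptyset$; for $i=1,\dots,n$ choose any unnumbered vertex $x$ such that there is no unnumbered $y$ with $\mathrm{label}(x)\prec\mathrm{label}(y)$, set $\sigma(i)=x$, and add $i$ to the labels of the unnumbered neighbors of $x$, where $A\prec B$ iff ($A=\emptyset$ and $B\neq\emptyset$) or $\max(A)<\max(B)$. The $\mathcal{F}$-tree of $\sigma$ is the spanning tree containing, for each $v\neq\sigma(1)$, the edge from $v$ to its leftmost neighbor in $\sigma$. A vertex $v\neq\sigma(1)$ that is a leaf of the $\mathcal{F}$-tree is an $\mathcal{F}$-branch leaf of $\sigma$. *)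

From mathcomp Require Import all_boot.
Set Implicit Arguments. Unset Strict Implicit. Unset Printing Implicit Defensive.

Definition simple_graph (T : finType) (e : rel T) : Prop :=
  symmetric e /\ irreflexive e.

Definition graph_connected (T : finType) (e : rel T) : Prop :=
  forall x y : T, connect e x y.

Definition del_vertex (T : finType) (e : rel T) (v : T) : rel T :=
  [rel a b | [&& e a b, a != v & b != v]].

(* v is a cut vertex: its removal increases the number of components, i.e.
   two vertices other than v, connected in G, are disconnected in G - v. *)
Definition cut_vertex (T : finType) (e : rel T) (v : T) : Prop :=
  exists x y : T, [/\ x != v, y != v, connect e x y &
                      ~~ connect (del_vertex e v) x y].

Definition is_clique (T : finType) (e : rel T) (K : {set T}) : Prop :=
  forall x y, x \in K -> y \in K -> x != y -> e x y.

Definition is_independent (T : finType) (e : rel T) (I : {set T}) : Prop :=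
  forall x y, x \in I -> y \in I -> ~~ e x y.

Definition split_graph (T : finType) (e : rel T) : Prop :=
  exists K : {set T}, is_clique e K /\ is_independent e (~: K).

(* A vertex ordering sigma is represented by the sequence
   [:: sigma(1); ...; sigma(n)]: a duplicate-free enumeration of all vertices.
   Position p (0-based) in the sequence corresponds to number p.+1. *)
Definition vertex_ordering (T : finType) (s : seq T) : Prop :=
  uniq s /\ forall v : T, v \in s.

(* label of x just before step i.+1 (i.e. after sigma(1..i) were numbered):
   the numbers j.+1, j < i, such that sigma(j.+1) is adjacent to x. *)
Definition dfs_label (T : finType) (e : rel T) (s : seq T) (i : nat) (x : T)
  : seq nat :=
  [seq j.+1 | j <- iota 0 i & e (nth x s j) x].

Definition seq_max (A : seq nat) : nat := foldr maxn 0 A.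

Definition label_prec (A B : seq nat) : bool :=
  ((A == [::]) && (B != [::])) ||
  [&& A != [::], B != [::] & seq_max A < seq_max B].

(* sigma is a DFS ordering: produced by the label search, i.e. at each step
   i.+1 the chosen vertex sigma(i.+1) has no unnumbered y with a larger label. *)
Definition is_DFS_ordering (T : finType) (e : rel T) (s : seq T) : Prop :=
  vertex_ordering s /\
  forall (i : nat) (y : T), i < size s -> y \in drop i s ->
    ~~ label_prec (dfs_label e s i (nth y s i)) (dfs_label e s i y).

Definition F_parent (T : finType) (e : rel T) (s : seq T) (u : T) : T :=
  nth u s (find (e u) s).

Definition F_tree_adj (T : finType) (e : rel T) (s : seq T) (u w : T) : bool :=
  ((u != head u s) && (F_parent e s u == w)) ||
  ((w != head w s) && (F_parent e s w == u)).

Definition F_branch_leaf (T : finType) (e : rel T) (s : seq T) (v : T) : Prop :=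
  v != head v s /\ #|[set w | F_tree_adj e s v w]| = 1.

From mathcomp Require Import all_boot zify.

(* If v is a cut vertex, let w be the first vertex of a DFS ordering lying in a
   component of G - v that avoids the start vertex.  Every vertex reaches an
   earlier neighbour in a DFS ordering of a connected graph, and the only
   neighbour of w outside its component is v, so w is an F-child of v; since v
   also has an F-parent, v is not a leaf.
   Conversely, a split partition K can be chosen with K \ v nonempty.  Listing
   the clique K \ v first is a legal start of the label search.  Every
   neighbour of v already has a neighbour in K \ v (for a neighbour outside K
   this is exactly the failure of v to be a cut vertex), so its leftmost
   neighbour precedes v: v has no F-children. *)

Set Implicit Arguments.
Unset Strict Implicit.
Unset Printing Implicit Defensive.

Lemma seq_max_leq (s : seq nat) n : (seq_max s <= n) = all (leq^~ n) s.
Proof. by elim: s => //= a s IH; rewrite geq_max IH. Qed.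

Lemma leq_seq_max (s : seq nat) x : x \in s -> x <= seq_max s.
Proof.
elim: s => //= a s IH; rewrite in_cons leq_max => /predU1P [->|/IH ->].
  by rewrite leqnn.
by rewrite orbT.
Qed.

Lemma label_prec_seq_max (A B : seq nat) :
  label_prec A B -> {in B, forall b, 0 < b} -> seq_max A < seq_max B.
Proof.
case/orP => [/andP [/eqP -> B_nil] B_gt0 | /and3P [_ _ //]].
case: B B_nil B_gt0 => [//|b B] _ B_gt0 /=.
exact: leq_trans (B_gt0 b (mem_head _ _)) (leq_maxl _ _).
Qed.

Lemma mem_drop_index (T : eqType) (s : seq T) x i :
  x \in s -> i <= index x s -> x \in drop i s.
Proof.
move=> xs le_i; move: xs; rewrite -{1}(cat_take_drop i s) mem_cat.
by rewrite in_take_leq ?(leq_trans le_i) ?index_size // ltnNge le_i.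
Qed.

Lemma connect_isolated (T : finType) (r : rel T) x y :
  (forall z, ~~ r x z) -> connect r x y = (x == y).
Proof.
move=> x_isol; apply/idP/eqP => [/connectP [[|z p] //= /andP [rxz _] _]|->].
  by have := x_isol z; rewrite rxz.
exact: connect0.
Qed.

Section LabelSearch.
Variables (T : finType) (e : rel T).
Implicit Types (s p q : seq T) (x y : T).

Lemma dfs_label_max s i x : seq_max (dfs_label e s i x) <= i.
Proof.
rewrite seq_max_leq; apply/allP => b /mapP [j + ->].
by rewrite mem_filter mem_iota add0n => /and3P [_ _ ji].
Qed.

Lemma mem_dfs_label s i x j :
  j < i -> e (nth x s j) x -> j.+1 \in dfs_label e s i x.
Proof. by move=> ji ejx; apply: map_f; rewrite mem_filter mem_iota ji ejx. Qed.

Lemma dfs_label_gt0 s i x : {in dfs_label e s i x, forall b, 0 < b}.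
Proof. by move=> _ /mapP [j _ ->]. Qed.

Lemma dfs_label_cat p q i x :
  i <= size p -> dfs_label e (p ++ q) i x = dfs_label e p i x.
Proof.
move=> le_ip; congr map; apply: eq_in_filter => j.
by rewrite mem_iota add0n nth_cat => /andP [_ /leq_trans ->].
Qed.

(* As labels are positive, [label_prec A B] amounts to [seq_max A < seq_max B];
   so this says that the first [size p] steps of the label search may produce [p]. *)
Definition dfs_prefix p :=
  uniq p /\ forall i y, i < size p -> y \notin take i p ->
    seq_max (dfs_label e p i y) <= seq_max (dfs_label e p i (nth y p i)).

Lemma dfs_prefix_DFS s :
  dfs_prefix s -> (forall x, x \in s) -> is_DFS_ordering e s.
Proof.
move=> [s_uniq s_max] s_all; split=> // i y i_lt y_drop.
apply/negP => /label_prec_seq_max /(_ (@dfs_label_gt0 _ _ _)).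
apply/negP; rewrite -leqNgt; apply: s_max => //.
move: s_uniq; rewrite -{1}(cat_take_drop i s) cat_uniq => /and3P [_ /hasPn y_take _].
exact: y_take.
Qed.

Lemma dfs_prefix_rcons p y :
  dfs_prefix p -> y \notin p ->
  (forall x, x \notin p ->
     seq_max (dfs_label e p (size p) x) <= seq_max (dfs_label e p (size p) y)) ->
  dfs_prefix (rcons p y).
Proof.
move=> [p_uniq p_max] y_new y_max; rewrite -cats1.
split=> [|i x]; first by rewrite cats1 rcons_uniq y_new p_uniq.
rewrite size_cat addn1 ltnS leq_eqVlt => /predU1P [->|lt_ip].
  by rewrite take_size_cat // nth_cat ltnn subnn !dfs_label_cat //; apply: y_max.
by rewrite take_cat lt_ip nth_cat lt_ip !dfs_label_cat ?(ltnW lt_ip) //; apply: p_max.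
Qed.

Lemma dfs_prefix_extend p : dfs_prefix p -> exists q, is_DFS_ordering e (p ++ q).
Proof.
have [n] := ubnP (#|T| - size p); elim: n p => // n IH p.
rewrite ltnS => le_n p_dfs.
have [p_all | /forallPn [y0 y0_new]] := boolP [forall x, x \in p].
  by exists [::]; rewrite cats0; apply: dfs_prefix_DFS => // x; apply: (forallP p_all).
have [y y_new y_max] :=
  @arg_maxnP _ y0 [predC p] (fun x => seq_max (dfs_label e p (size p) x)) y0_new.
have lt_pT : size p < #|T|.
  have := max_card (mem (y0 :: p)).
  by rewrite (card_uniqP _) //= y0_new; case: p_dfs.
have [|q pyq_dfs] := IH (rcons p y) _ (dfs_prefix_rcons p_dfs y_new y_max).
  by rewrite size_rcons; lia.
by exists (y :: q); rewrite -cat_rcons.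
Qed.

Lemma clique_dfs_prefix (P : {set T}) : is_clique e P -> dfs_prefix (enum P).
Proof.
move=> P_clique; split=> [|[|i] y i_lt _]; first exact: enum_uniq.
  by apply: leq_trans (dfs_label_max _ _ _) _.
apply: leq_trans (dfs_label_max _ _ _) (leq_seq_max (mem_dfs_label _ _)) => //.
have lt_i : i < size (enum P) := ltnW i_lt.
rewrite (set_nth_default y) //; apply: P_clique; try by rewrite -mem_enum mem_nth.
by rewrite nth_uniq ?enum_uniq // (ltn_eqF (ltnSn i)).
Qed.

Lemma index_F_parent_leq s x y :
  uniq s -> y \in s -> e x y -> index (F_parent e s x) s <= index y s.
Proof.
move=> s_uniq ys exy; have has_x : has (e x) s by apply/hasP; exists y.
rewrite /F_parent index_uniq -?has_find // leqNgt; apply/negP => lt_find.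
by have := before_find y lt_find; rewrite nth_index // exy.
Qed.

Hypothesis e_sym : symmetric e.

Lemma dfs_earlier_neighbor s x :
  is_DFS_ordering e s -> graph_connected e -> x != head x s ->
  exists2 y, index y s < index x s & e x y.
Proof.
move=> [[s_uniq s_all] s_dfs] e_conn x_head; set i := index x s.
have i_lt : i < size s by rewrite index_mem.
suff /hasP [j]: has (fun j => e (nth x s j) x) (iota 0 i).
  rewrite mem_iota add0n => /andP [_ ji] ejx.
  by exists (nth x s j); rewrite 1?e_sym // index_uniq // (ltn_trans ji).
apply: contraT; rewrite has_filter negbK => /eqP x_filter.
have x_label : dfs_label e s i x = [::] by rewrite /dfs_label x_filter.
have unnumbered_label y : i <= index y s -> dfs_label e s i y = [::].
  move=> y_ge; have := s_dfs i y i_lt (mem_drop_index (s_all y) y_ge).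
  by rewrite nth_index // x_label /label_prec /= orbF negbK => /eqP.
(* an empty label at step i forces every unnumbered label to be empty,
   so no edge leaves the numbered vertices *)
have numbered_closed : closed e [pred y | index y s < i].
  apply: (intro_closed (sym_connect_sym e_sym)) => a b eab.
  rewrite !inE => a_lt; rewrite ltnNge; apply/negP => b_ge.
  have := @mem_dfs_label s i b _ a_lt.
  by rewrite nth_index // eab (unnumbered_label b b_ge) => /(_ isT).
have i_gt0 : 0 < i.
  rewrite lt0n; apply: contraNneq x_head => i0.
  by rewrite -nth0 -i0 nth_index.
have := closed_connect numbered_closed (e_conn (head x s) x).
by rewrite !inE ltnn -nth0 index_uniq ?i_gt0 // (leq_ltn_trans (leq0n i) i_lt).
Qed.

Lemma F_parent_earlier s x :
  is_DFS_ordering e s -> graph_connected e -> x != head x s ->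
  e x (F_parent e s x) /\ index (F_parent e s x) s < index x s.
Proof.
move=> s_dfs e_conn x_head; have [[s_uniq s_all] _] := s_dfs.
have [y y_lt xy] := dfs_earlier_neighbor s_dfs e_conn x_head.
split; last exact: leq_ltn_trans (index_F_parent_leq s_uniq (s_all y) xy) y_lt.
by apply: nth_find; apply/hasP; exists y.
Qed.

(* The witness is the first vertex of [s] in a component of G - v avoiding
   [head s]. *)
Lemma cut_vertex_F_child s v :
  is_DFS_ordering e s -> graph_connected e -> cut_vertex e v ->
  exists2 w, w != head w s & F_parent e s w = v.
Proof.
case: s => [|a s'] s_dfs e_conn [x [y [xv yv _ not_xy]]].
  by case: s_dfs => [[_ /(_ v)]].
set s := a :: s' in s_dfs *; have [[s_uniq s_all] _] := s_dfs.
set r := del_vertex e v.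
have r_sym : connect_sym r.
  by apply: sym_connect_sym => b c; rewrite /r /del_vertex /= e_sym (andbC (b != v)).
have [z zv not_az] : exists2 z, z != v & ~~ connect r a z.
  have [ax | ] := boolP (connect r a x); last by exists x.
  exists y => //; apply: contra not_xy => ay.
  by apply: connect_trans ay; rewrite r_sym.
pose C := [pred t | connect r z t].
have not_Cv : ~~ C v.
  rewrite inE r_sym connect_isolated; first by rewrite eq_sym.
  by move=> t; rewrite /r /del_vertex /= eqxx andbF.
have has_C : has C s by apply/hasP; exists z; rewrite // inE.
set w := nth v s (find C s).
have Cw : C w := nth_find v has_C.
have wv : w != v by apply: contraNneq not_Cv => <-.
have w_head : w != a by apply: contraNneq not_az => wa; rewrite r_sym -wa.
have [w_par par_lt] := F_parent_earlier s_dfs e_conn w_head.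
exists w => //; apply/eqP; apply: contraT => par_v.
have : C (F_parent e s w).
  by apply: connect_trans Cw (connect1 _); rewrite /r /del_vertex /= w_par wv par_v.
rewrite -(nth_index v (s_all (F_parent e s w))) before_find //.
by rewrite -[find C s](@index_uniq _ v _ s) -?has_find.
Qed.

Lemma F_branch_leaf_not_cut_vertex s v :
  is_DFS_ordering e s -> graph_connected e -> F_branch_leaf e s v ->
  ~ cut_vertex e v.
Proof.
move=> s_dfs e_conn [v_head v_leaf].
move=> /(cut_vertex_F_child s_dfs e_conn) [w w_head w_child].
have [_ v_par_lt] := F_parent_earlier s_dfs e_conn v_head.
have [_ w_par_lt] := F_parent_earlier s_dfs e_conn w_head.
rewrite w_child in w_par_lt.
have par_neq_w : F_parent e s v != w.
  by apply: contraTneq v_par_lt => ->; rewrite -leqNgt ltnW.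
have : [set F_parent e s v; w] \subset [set t | F_tree_adj e s v t].
  apply/subsetP => t; rewrite !inE /F_tree_adj => /pred2P [] ->.
    by rewrite v_head eqxx.
  by rewrite w_head w_child eqxx orbT.
by move/subset_leq_card; rewrite v_leaf cards2 par_neq_w.
Qed.

Lemma F_branch_leaf_clique_prefix (P : {set T}) q v u :
  vertex_ordering (enum P ++ q) -> is_clique e P -> P != set0 -> v \notin P ->
  e v u -> (forall w, e v w -> w \notin P -> exists2 k, k \in P & e w k) ->
  F_branch_leaf e (enum P ++ q) v.
Proof.
move=> [s_uniq s_all] P_clique P_nonempty vP vu v_nbrs; set s := enum P ++ q.
have head_P x : head x s \in P.
  have [h hP] := set0Pn _ P_nonempty; rewrite -mem_enum.
  by move: hP; rewrite -mem_enum /s; case: (enum P) => [|a p] //= _; rewrite mem_head.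
have index_P k : k \in P -> index k s < size (enum P).
  by move=> kP; rewrite index_cat mem_enum kP index_mem mem_enum.
have index_v : size (enum P) <= index v s.
  by rewrite index_cat mem_enum (negbTE vP) leq_addr.
have v_head : v != head v s by apply: contraNneq vP => ->.
have no_child w : w != head w s -> F_parent e s w != v.
  move=> w_head; apply/eqP => w_child.
  have [w_nbr | w_isol] := boolP (has (e w) s); last first.
    move: w_child; rewrite /F_parent (hasNfind w_isol) nth_default // => wv.
    by move: w_isol; rewrite wv => /hasP; apply; exists u.
  have vw : e v w by rewrite e_sym -[X in e _ X]w_child; apply: nth_find.
  have [k kP wk] : exists2 k, k \in P & e w k.
    have [wP | ] := boolP (w \in P); last exact: v_nbrs.
    by exists (head w s); rewrite // P_clique.
  have := leq_trans (leq_ltn_trans (index_F_parent_leq s_uniq (s_all k) wk)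
                                   (index_P k kP)) index_v.
  by rewrite w_child ltnn.
split=> //; have -> : [set t | F_tree_adj e s v t] = [set F_parent e s v].
  apply/setP => t; rewrite !inE /F_tree_adj v_head /=.
  have [/no_child/negbTE -> | _] := boolP (t != head t s); by rewrite orbF eq_sym.
by rewrite cards1.
Qed.

End LabelSearch.

Section SplitGraph.
Variables (T : finType) (e : rel T).

Lemma connected_neighbor v : graph_connected e -> 1 < #|T| -> exists u, e v u.
Proof.
move=> e_conn /card_gt1P [x [y [_ _ xy]]].
have [z zv] : exists z, z != v.
  by case: (eqVneq x v) => [<-|]; [exists y; rewrite eq_sym | exists x].
apply/existsP; apply: contraT; rewrite negb_exists => /forallP v_isol.
by have := e_conn v z; rewrite connect_isolated // eq_sym (negbTE zv).
Qed.

(* if K \ v is empty, the edge {v, u} is a clique whose complement is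
   contained in the old independent set *)
Lemma split_partition_setD1_neq0 v u :
  simple_graph e -> split_graph e -> e v u ->
  exists K : {set T}, [/\ is_clique e K, is_independent e (~: K) & K :\ v != set0].
Proof.
move=> [e_sym e_irr] [K [K_clique Kc_indep]] vu.
have uv : u != v by apply: contraTneq vu => ->; rewrite e_irr.
have [Kv_neq0 | K_sub] := boolP (K :\ v != set0); first by exists K.
have notK x : x != v -> x \notin K.
  by move=> xv; apply: contraNN K_sub => xK; apply/set0Pn; exists x; rewrite !inE xv.
exists [set v; u]; split.
- move=> x y; rewrite !inE => /pred2P [] -> /pred2P [] ->; rewrite ?eqxx //.
  by rewrite e_sym.
- move=> x y; rewrite !inE !negb_or => /andP [xv _] /andP [yv _].
  by apply: Kc_indep; rewrite inE notK.
- by apply/set0Pn; exists u; rewrite !inE eqxx orbT uv.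
Qed.

Lemma noncut_neighbor_in_clique (K : {set T}) v w :
  graph_connected e -> is_independent e (~: K) -> K :\ v != set0 ->
  ~ cut_vertex e v -> w != v -> w \notin K -> exists2 k, k \in K :\ v & e w k.
Proof.
move=> e_conn Kc_indep Kv_neq0 v_noncut wv wK.
have [/exists_inP // | /exists_inPn no_nbr] := boolP [exists k in K :\ v, e w k].
have [k0 k0K] := set0Pn _ Kv_neq0; have /setD1P [k0v k0K'] := k0K.
case: v_noncut; exists w, k0; split => //.
rewrite connect_isolated; first by apply: contraNneq wK => ->.
move=> z; rewrite /del_vertex /=; apply/and3P => [[wz _ zv]].
have [zK | zK] := boolP (z \in K).
  by have := no_nbr z; rewrite !inE zv zK wz => /(_ isT).
by have := Kc_indep w z; rewrite !inE wK zK wz => /(_ isT isT).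
Qed.

End SplitGraph.

Theorem theorem14 (T : finType) (e : rel T) :
  simple_graph e -> graph_connected e -> split_graph e -> 2 <= #|T| ->
  forall v : T,
    (exists s : seq T, is_DFS_ordering e s /\ F_branch_leaf e s v) <->
    ~ cut_vertex e v.
Proof.
move=> [e_sym e_irr] e_conn e_split T_gt1 v; split.
  by case=> s [s_dfs v_leaf]; apply: F_branch_leaf_not_cut_vertex s_dfs e_conn v_leaf.
move=> v_noncut; have [u vu] := connected_neighbor v e_conn T_gt1.
have [K [K_clique Kc_indep Kv_neq0]] := split_partition_setD1_neq0 (conj e_sym e_irr) e_split vu.
have Kv_clique : is_clique e (K :\ v).
  by move=> x y /setD1P [_ xK] /setD1P [_ yK]; apply: K_clique.
have [q Kq_dfs] := dfs_prefix_extend (clique_dfs_prefix Kv_clique).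
exists (enum (K :\ v) ++ q); split => //.
have [Kq_order _] := Kq_dfs.
apply: (F_branch_leaf_clique_prefix e_sym Kq_order Kv_clique Kv_neq0 _ vu).
  by rewrite !inE eqxx.
move=> w vw; have wv : w != v by apply: contraTneq vw => ->; rewrite e_irr.
rewrite in_setD1 wv => wK.
exact: noncut_neighbor_in_clique.
Qed.
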